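(* Let $n\ge2$ and consider Gram blocks of a fully symmetric solution: $P_1,\dots,P_n\in\mathbb{R}^{d\times p}$ with $P_i^TP_i=G^A$ for all $i$ and $P_i^TP_j=G^C$ for all $i\ne j$, and let $G^T=\frac1n(G^A+(n-1)G^C)$, $G^D=G^A-G^T$. Let $\xi_{g^*},\xi_{x^*}\in\mathbb{R}^p$ and $g_i^*=P_i\xi_{g^*}$, $x_i^*=P_i\xi_{x^*}$ ($g_i^*$ representing $\nabla f_i(x_i^* )$). Then the optimality constraints $\frac1n\sum_{i=1}^ng_i^*=0$ and $x_i^*=x_j^*$ for all $i,j$ are equivalent to $\xi_{g^*}^TG^T\xi_{g^*}=0$ and $\xi_{x^*}^TG^D\xi_{x^*}=0$.
   Context: This arises in performance estimation problems for distributed optimization of $\frac1n\sum_if_i(x)$ where each agent holds a copy $x_i^*$ of the minimizer $x^*$ and the gradient of its local function there; the system-level stationarity condition is $\frac1n\sum_i\nabla f_i(x^* )=0$. *)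

From HB Require Import structures.
From mathcomp Require Import all_boot all_order all_algebra.
Set Implicit Arguments. Unset Strict Implicit. Unset Printing Implicit Defensive.
Import Order.TTheory GRing.Theory Num.Theory.
Local Open Scope ring_scope.

Definition GramT (R : realFieldType) (n p : nat) (GA GC : 'M[R]_p) : 'M[R]_p :=
  (n%:R)^-1 *: (GA + (n.-1)%:R *: GC).

Definition GramD (R : realFieldType) (n p : nat) (GA GC : 'M[R]_p) : 'M[R]_p :=
  GA - GramT n GA GC.

From HB Require Import structures.
From mathcomp Require Import all_boot all_order all_algebra.
From mathcomp Require Import ring.
Import Order.TTheory GRing.Theory Num.Theory.
Set Implicit Arguments. Unset Strict Implicit. Unset Printing Implicit Defensive.
Local Open Scope ring_scope.

(* The constraints are Gram-matrix conditions because they are vanishing norms: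
   |sum_i g_i|^2 = n^2 xi_g^T G^T xi_g, since (sum_i P_i)^T (sum_i P_i)
   = n (G^A + (n-1) G^C); and for i <> j, |x_i - x_j|^2 = 2 xi_x^T (G^A - G^C) xi_x,
   where G^D = (n-1)/n (G^A - G^C).  A real vector vanishes iff its norm does,
   and n >= 2 makes every scalar factor nonzero and supplies a pair i <> j. *)

Lemma trmx_mul_self_eq0 (R : realDomainType) (m : nat) (v : 'cV[R]_m) :
  (v^T *m v == 0) = (v == 0).
Proof.
apply/idP/eqP => [/eqP/matrixP/(_ 0 0)|->]; last by rewrite mulmx0.
rewrite !mxE => sum_sq0; apply/matrixP => k j; rewrite (ord1 j) mxE.
have sq_ge0 i : predT i -> 0 <= v^T 0 i * v i 0 by rewrite mxE -expr2 sqr_ge0.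
have /eqP := psumr_eq0P sq_ge0 sum_sq0 (i := k) isT.
by rewrite mxE -expr2 sqrf_eq0 => /eqP.
Qed.

Lemma quad_form_mulmx (R : comPzRingType) (d p : nat)
    (A : 'M[R]_(d, p)) (v : 'cV[R]_p) :
  (A *m v)^T *m (A *m v) = v^T *m (A^T *m A) *m v.
Proof. by rewrite trmx_mul !mulmxA. Qed.

Lemma quad_formZ (R : comPzRingType) (p : nat) (c : R) (M : 'M[R]_p) (v : 'cV[R]_p) :
  v^T *m (c *: M) *m v = c *: (v^T *m M *m v).
Proof. by rewrite -scalemxAr -scalemxAl. Qed.

Section GramMatrices.
Variables (R : realFieldType) (n p : nat) (GA GC : 'M[R]_p).
Hypothesis n_gt0 : (0 < n)%N.

Let n_neq0 : n%:R != 0 :> R.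
Proof. by rewrite pnatr_eq0 -lt0n. Qed.

Lemma scale_GramT : n%:R *: GramT n GA GC = GA + n.-1%:R *: GC.
Proof. by rewrite /GramT scalerA mulfV // scale1r. Qed.

Lemma GramDE : GramD n GA GC = (n.-1%:R / n%:R) *: (GA - GC).
Proof.
have n_pred : n%:R = n.-1%:R + 1 :> R by rewrite natr1 prednK.
rewrite /GramD /GramT; apply/matrixP => a b; rewrite !mxE n_pred.
by field; rewrite -n_pred.
Qed.

End GramMatrices.

Section FullySymmetricBlocks.
Variables (R : realFieldType) (n d p : nat).
Variables (P : 'I_n -> 'M[R]_(d, p)) (GA GC : 'M[R]_p).
Hypothesis PtP : forall i, (P i)^T *m P i = GA.
Hypothesis PtP_neq : forall i j, i != j -> (P i)^T *m P j = GC.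

Lemma gram_sum : (\sum_i P i)^T *m (\sum_i P i) = n%:R *: (GA + n.-1%:R *: GC).
Proof.
rewrite [(\sum_i P i)^T]linear_sum mulmx_suml.
rewrite (eq_bigr (fun _ => GA + n.-1%:R *: GC)) => [|i _].
  by rewrite sumr_const card_ord -scaler_nat.
rewrite mulmx_sumr (bigD1 i) //= PtP.
rewrite (eq_bigr (fun _ => GC)) => [|j ji]; last by rewrite PtP_neq // eq_sym.
by rewrite sumr_const cardC1 card_ord scaler_nat.
Qed.

Lemma gram_sub i j : i != j -> (P i - P j)^T *m (P i - P j) = 2%:R *: (GA - GC).
Proof.
move=> ij; rewrite [(P i - P j)^T]linearB /= mulmxBl !mulmxBr !PtP.
rewrite PtP_neq // PtP_neq 1?eq_sym //.
by rewrite scaler_nat mulr2n; apply/matrixP => a b; rewrite !mxE; ring.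
Qed.

Lemma mean_eq0_GramT (xi : 'cV[R]_p) : (0 < n)%N ->
  n%:R^-1 *: \sum_i P i *m xi = 0 <-> xi^T *m GramT n GA GC *m xi = 0.
Proof.
move=> n_gt0; have n_neq0 : n%:R != 0 :> R by rewrite pnatr_eq0 -lt0n.
rewrite !(rwP eqP) scaler_eq0 invr_eq0 (negbTE n_neq0) -mulmx_suml.
rewrite -trmx_mul_self_eq0 quad_form_mulmx gram_sum -scale_GramT // scalerA.
by rewrite -expr2 quad_formZ scaler_eq0 expf_eq0 (negbTE n_neq0) andbF.
Qed.

Lemma consensus_GramD (xi : 'cV[R]_p) : (1 < n)%N ->
  (forall i j, P i *m xi = P j *m xi) <-> xi^T *m GramD n GA GC *m xi = 0.
Proof.
move=> n_gt1; have n_gt0 := ltnW n_gt1.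
have c_neq0 : n.-1%:R / n%:R != 0 :> R.
  have n1_gt0 : (0 < n.-1)%N by rewrite -ltnS prednK.
  by rewrite mulf_eq0 invr_eq0 !pnatr_eq0 negb_or -!lt0n n1_gt0.
have dist_sq i j : i != j -> (P i *m xi - P j *m xi)^T *m (P i *m xi - P j *m xi)
    = 2%:R *: (xi^T *m (GA - GC) *m xi).
  by move=> ij; rewrite -mulmxBl quad_form_mulmx gram_sub // quad_formZ.
rewrite GramDE // quad_formZ; split => [eq_x | /eqP].
- pose i0 : 'I_n := Ordinal n_gt0; pose i1 : 'I_n := Ordinal n_gt1.
  have /esym/eqP := dist_sq i0 i1 isT; rewrite (eq_x i0 i1) subrr trmx0 mul0mx.
  by rewrite scaler_eq0 pnatr_eq0 /= => /eqP ->; rewrite scaler0.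
- rewrite scaler_eq0 (negbTE c_neq0) /= => /eqP quad0 i j.
  have [-> // | ij] := eqVneq i j.
  by apply/eqP; rewrite -subr_eq0 -trmx_mul_self_eq0 dist_sq // quad0 scaler0.
Qed.

End FullySymmetricBlocks.

Theorem proposition10 (R : realFieldType) (n d p : nat)
    (P : 'I_n -> 'M[R]_(d, p)) (GA GC : 'M[R]_p) (xi_g xi_x : 'cV[R]_p) :
  (2 <= n)%N ->
  (forall i : 'I_n, (P i)^T *m P i = GA) ->
  (forall i j : 'I_n, i != j -> (P i)^T *m P j = GC) ->
  let g := fun i : 'I_n => P i *m xi_g in
  let x := fun i : 'I_n => P i *m xi_x in
  ((n%:R)^-1 *: (\sum_(i < n) g i) = 0 /\ (forall i j : 'I_n, x i = x j))
  <->
  (xi_g^T *m GramT n GA GC *m xi_g = 0 /\ xi_x^T *m GramD n GA GC *m xi_x = 0).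
Proof.
move=> n_gt1 PtP PtP_neq g x.
rewrite /g /x (mean_eq0_GramT PtP PtP_neq _ (ltnW n_gt1)).
by rewrite (consensus_GramD PtP PtP_neq _ n_gt1).
Qed.
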